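(* Let ${\mathcal M}$ be a $q$-matroid on $\mathbb{F}_q^n$ of rank $r\ge1$, and let $F_1,\dots,F_t$ be its bases listed in increasing order with respect to $\prec_q^r$. Order the facets of the order complex $I_{{\mathcal M}}$ by $\prec_\ell$ and let $\mathcal{R}$ be the associated restriction operator. Then there exists a facet $A$ of $I_{{\mathcal M}}$ with $\mathcal{R}(A)=A$ if and only if there exist indices $1\le i<j\le t$ such that $\dim_{\mathbb{F}_q}(F_i\cap F_j)=r-1$ and $\min(F_j\setminus\{0\})\notin F_i$, where the minimum is taken with respect to $\prec$.
   Context: A $q$-matroid is a pair $(E,\rho)$, $E=\mathbb{F}_q^n$, with $\rho$ from subspaces to $\mathbb{Z}_{\ge0}$ satisfying $0\le\rho(X)\le\dim X$, monotonicity, and $\rho(X+Y)+\rho(X\cap Y)\le\rho(X)+\rho(Y)$; rank $=\rho(E)$; $U$ is independent if $\rho(U)=\dim U$; bases are maximal independent subspaces (all of dimension $r$). Fix a total order $\prec$ on $\mathbb{F}_q$ with $0\prec1\prec\alpha$ for all $\alpha\ne0,1$, extended lexicographically to $\mathbb{F}_q^n$ and to tuples in $(\mathbb{F}_q^n)^k$. For a $k$-dimensional subspace $U$ with reduced row echelon generator matrix having rows $u_k,u_{k-1},\dots,u_1$ from top to bottom, its reduced generator is $(u_1,\dots,u_k)$; the order $\prec_q^k$ on $k$-dimensional subspaces is the lexicographic order of reduced generators. The order complex $I_{{\mathcal M}}$ is the simplicial complex whose vertices are the nonzero independent subspaces and whose faces are chains of them; its facets are the chains $A=(A_1\subsetneq\cdots\subsetneq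 A_r)$ of independent subspaces with $\dim A_m=m$. For two such facets $U,V$, $U\prec_\ell V$ iff, for the largest index $e$ with $U_e\ne V_e$, one has $U_e\prec_q^e V_e$; this linear order of facets is a shelling of $I_{{\mathcal M}}$. For a facet $A$, $\mathcal{R}(A)$ is the set of vertices $A_m$ of $A$ such that $A\setminus\{A_m\}$ is a face of some facet preceding $A$ in the order $\prec_\ell$. *)

From HB Require Import structures.
From mathcomp Require Import all_boot all_order all_algebra.
Set Implicit Arguments. Unset Strict Implicit. Unset Printing Implicit Defensive.
Import GRing.Theory.
Local Open Scope ring_scope.

Section QMatroid.
Variables (F : finFieldType) (n : nat).
(* the total order on F_q is encoded by an injective "position" map
   o : F -> nat with o 0 = 0 and o 1 = 1 : x ≺ y iff o x < o y *)
Variable o : F -> nat.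

Definition subsp := {vspace 'rV[F]_n}.

Definition qmatroid_axioms (rho : subsp -> nat) : Prop :=
  [/\ forall X : subsp, (rho X <= \dim X)%N,
      forall X Y : subsp, (X <= Y)%VS -> (rho X <= rho Y)%N &
      forall X Y : subsp, (rho (X + Y)%VS + rho (X :&: Y)%VS <= rho X + rho Y)%N].

Definition qrank (rho : subsp -> nat) : nat := rho fullv.

Definition independent (rho : subsp -> nat) (U : subsp) : Prop := rho U = \dim U.

Definition qbasis (rho : subsp -> nat) (B : subsp) : Prop :=
  independent rho B /\
  forall U : subsp, independent rho U -> (B <= U)%VS -> U = B.

Definition vec_lt (v w : 'rV[F]_n) : Prop :=
  exists j : 'I_n, (forall j' : 'I_n, (j' < j)%N -> v ord0 j' = w ord0 j') /\
                   (o (v ord0 j) < o (w ord0 j))%N.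

Definition is_rref (k : nat) (M : 'M[F]_(k, n)) : Prop :=
  exists p : 'I_k -> 'I_n,
    [/\ forall i i' : 'I_k, (i < i')%N -> (p i < p i')%N,
        forall i : 'I_k, M i (p i) = 1,
        forall (i : 'I_k) (j : 'I_n), (j < p i)%N -> M i j = 0 &
        forall i i' : 'I_k, i' != i -> M i' (p i) = 0].

Definition rowspan (k : nat) (M : 'M[F]_(k, n)) : subsp :=
  <<[seq row i M | i <- enum 'I_k]>>%VS.

(* Lexicographic order on reduced generators (u_1,...,u_k), where u_1 is the
   bottom row (index k-1) of the RREF matrix, u_k the top row (index 0).
   So u_1 (largest row index) is compared first. *)
Definition redgen_lt (k : nat) (M N : 'M[F]_(k, n)) : Prop :=
  exists i : 'I_k, (forall i' : 'I_k, (i < i')%N -> row i' M = row i' N) /\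
                   vec_lt (row i M) (row i N).

Definition subsp_lt (k : nat) (U V : subsp) : Prop :=
  exists M N : 'M[F]_(k, n),
    [/\ is_rref M, is_rref N, rowspan M = U, rowspan N = V & redgen_lt M N].

Definition is_min_nonzero (U : subsp) (v : 'rV[F]_n) : Prop :=
  [/\ v \in U, v != 0 &
      forall w : 'rV[F]_n, w \in U -> w != 0 -> w != v -> vec_lt v w].

(* facets of the order complex I_M: chains A_1 ⊊ ... ⊊ A_r of independent
   subspaces with dim A_m = m (only indices 1..r are relevant) *)
Definition facet (rho : subsp -> nat) (A : nat -> subsp) : Prop :=
  (forall m, (1 <= m <= qrank rho)%N -> independent rho (A m) /\ \dim (A m) = m) /\
  (forall m, (1 <= m)%N -> (m < qrank rho)%N ->
       (A m <= A m.+1)%VS /\ A m != A m.+1).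

Definition facet_lt (rho : subsp -> nat) (U V : nat -> subsp) : Prop :=
  exists e, [/\ (1 <= e <= qrank rho)%N, U e != V e,
     forall e', (e < e' <= qrank rho)%N -> U e' = V e' &
     subsp_lt e (U e) (V e)].

(* A_m ∈ R(A): A \ {A_m} is a face of some facet B preceding A *)
Definition in_restriction (rho : subsp -> nat) (A : nat -> subsp) (m : nat) : Prop :=
  exists B, [/\ facet rho B, facet_lt rho B A &
    forall l, (1 <= l <= qrank rho)%N -> l != m ->
      exists l', (1 <= l' <= qrank rho)%N /\ A l = B l'].

Definition restriction_full (rho : subsp -> nat) (A : nat -> subsp) : Prop :=
  forall m, (1 <= m <= qrank rho)%N -> in_restriction rho A m.

End QMatroid.

(* The order [<_q^k] compares reduced generators starting from their bottom
   rows, and the bottom row of the reduced row echelon form of [U] is the least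
   nonzero vector [min U] of [U].  Hence [W' <_q^k W] forces [min W' <= min W],
   and conversely [min W' < min W] gives [W' <_q^k W].
   If [R(A) = A], let [v = min A_r] and [k] be least with [v \in A_k].  The facet
   [B] witnessing [A_k \in R(A)] differs from [A] only at [k], and [B_k :&: A_k]
   is [A_(k-1)] (or [0] if [k = 1]), which misses [v]; if [k < r] then
   [B_k <= A_r], so [v < min B_k <= min A_k = v].  Thus [k = r] and
   [(B_r, A_r)] is the required pair of bases.
   Conversely, extend [F_i :&: F_j] by [F_j] and refine it into a full flag
   [A] with [min A_(l+1) \notin A_l] for all [l].  Replacing [A_r] by [F_i], or
   [A_m] by [A_(m-1) + <min A_(m+1)>] for [m < r], yields a preceding facet. *)

From HB Require Import structures.
From mathcomp Require Import all_boot all_order all_algebra.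
From mathcomp Require Import zify.
Set Implicit Arguments. Unset Strict Implicit. Unset Printing Implicit Defensive.
Import GRing.Theory.
Local Open Scope ring_scope.

Section VectorSpaces.
Variables (K : fieldType) (vT : vectType K).
Implicit Types (U V Y : {vspace vT}) (x : vT).

Lemma dimv_lt U V : (U <= V)%VS -> U != V -> (\dim U < \dim V)%N.
Proof. by move=> UV; rewrite (ltn_leqif (dimv_leqif_eq UV)). Qed.

Lemma dimv_cap_lt U V : \dim U = \dim V -> U != V -> (\dim (U :&: V) < \dim U)%N.
Proof.
move=> dUV UV; apply: dimv_lt; first exact: capvSl.
apply: contra UV => /eqP capU; rewrite eqEdim dUV leqnn andbT.
by rewrite -capU capvSr.
Qed.

Lemma dimv_add_line Y x : x \notin Y -> \dim (Y + <[x]>) = (\dim Y).+1.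
Proof.
move=> xY; have x0 : x != 0 by apply: contraNneq xY => ->; rewrite mem0v.
rewrite dimv_disjoint_sum ?dim_vline ?x0 ?addn1 //.
apply/eqP; rewrite -subv0; apply/subvP => y /memv_capP[yY /vlineP[c yc]].
rewrite memv0 yc; have [->|c0] := eqVneq c 0; first by rewrite scale0r.
by case/negP: xY; rewrite -[x](scalerK c0) -yc memvZ.
Qed.

Lemma chain_subv (A : nat -> {vspace vT}) lo hi :
    (forall l, (lo <= l < hi)%N -> (A l <= A l.+1)%VS) ->
  forall l m, (lo <= l)%N -> (l <= m <= hi)%N -> (A l <= A m)%VS.
Proof.
move=> Astep l m lo_l /andP[]; elim: m => [|m IHm].
  by rewrite leqn0 => /eqP -> _.
rewrite leq_eqVlt => /orP[/eqP -> //|]; rewrite ltnS => l_m m_hi.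
apply: subv_trans (IHm l_m (ltnW m_hi)) _; apply: Astep.
by rewrite (leq_trans lo_l l_m).
Qed.

End VectorSpaces.

Section EchelonForm.
Variables (F : finFieldType) (n : nat).
Implicit Types (U : subsp F n) (u w : 'rV[F]_n).

Definition rref_pivots k (M : 'M[F]_(k, n)) (p : 'I_k -> 'I_n) : Prop :=
  [/\ forall i i' : 'I_k, (i < i')%N -> (p i < p i')%N,
      forall i : 'I_k, M i (p i) = 1,
      forall (i : 'I_k) (j : 'I_n), (j < p i)%N -> M i j = 0 &
      forall i i' : 'I_k, i' != i -> M i' (p i) = 0].

Lemma row_in_rowspan k (M : 'M[F]_(k, n)) i : row i M \in rowspan M.
Proof. by apply: memv_span; apply: map_f; rewrite mem_enum. Qed.

Lemma rowspan_lincomb k (M : 'M[F]_(k, n)) w :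
  w \in rowspan M -> exists c : 'I_k -> F, w = \sum_i c i *: row i M.
Proof.
rewrite /rowspan -[X in <<X>>%VS]/(tval [tuple row i M | i < k]) => /coord_span ->.
by eexists; apply: eq_bigr => i _; rewrite -tnth_nth tnth_mktuple.
Qed.

Lemma rowspan_col_mx k1 k2 (A : 'M[F]_(k1, n)) (B : 'M[F]_(k2, n)) :
  rowspan (col_mx A B) = (rowspan A + rowspan B)%VS.
Proof.
apply/eqP; rewrite eqEsubv subv_add; apply/and3P; split.
- apply/span_subvP => _ /mapP[i _ ->]; case: (split_ordP i) => i' ->.
    by rewrite rowKu (subvP (addvSl _ _)) ?row_in_rowspan.
  by rewrite rowKd (subvP (addvSr _ _)) ?row_in_rowspan.
- by apply/span_subvP => _ /mapP[i _ ->]; rewrite -(rowKu i A B) row_in_rowspan.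
- by apply/span_subvP => _ /mapP[i _ ->]; rewrite -(rowKd i A B) row_in_rowspan.
Qed.

Lemma rowspan_row u : rowspan u = <[u]>%VS.
Proof.
have enum1 : enum 'I_1 = [:: ord0] by apply: (inj_map val_inj); rewrite val_enum_ord.
by rewrite /rowspan enum1 span_seq1; congr <[_]>%VS; apply/rowP => j; rewrite mxE.
Qed.

Lemma sum_rows_coord k (M : 'M[F]_(k, n)) (c : 'I_k -> F) j :
  (\sum_i c i *: row i M) 0 j = \sum_i c i * M i j.
Proof. by rewrite summxE; apply: eq_bigr => i _; rewrite !mxE. Qed.

Lemma rref_pivot_coord k (M : 'M[F]_(k, n)) p (c : 'I_k -> F) i :
  rref_pivots M p -> (\sum_i c i *: row i M) 0 (p i) = c i.
Proof.
case=> _ p_one _ p_col; rewrite sum_rows_coord (bigD1 i) //= p_one mulr1.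
by rewrite big1 ?addr0 // => i' i'_i; rewrite p_col ?mulr0.
Qed.

Lemma rref_dim k (M : 'M[F]_(k, n)) : is_rref M -> \dim (rowspan M) = k.
Proof.
case=> p Mp; have: free [tuple row i M | i < k].
  apply/freeP => c c0 i; rewrite -(rref_pivot_coord c i Mp).
  suff -> : \sum_i c i *: row i M = 0 by rewrite mxE.
  by rewrite -[RHS]c0; apply: eq_bigr => i' _; rewrite -tnth_nth tnth_mktuple.
by rewrite /free size_tuple => /eqP.
Qed.

Lemma rref_pivots_col_mx k u (M : 'M[F]_(k, n)) p j0 :
    rref_pivots M p -> u 0 j0 = 1 -> (forall j : 'I_n, (j < j0)%N -> u 0 j = 0) ->
    (forall i, u 0 (p i) = 0) -> (forall i (j : 'I_n), (j <= j0)%N -> M i j = 0) ->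
  rref_pivots (col_mx u M) (fun i => if split i is inr i' then p i' else j0).
Proof.
case=> p_mono p_one p_lead p_col u_j0 u_lead u_piv M_lead.
have j0_p i : (j0 < p i)%N.
  by rewrite ltnNge; apply/negP => /(M_lead i)/eqP; rewrite p_one oner_eq0.
split.
- move=> i i'; case: splitP => a ->; case: splitP => b -> //; rewrite ?ord1 //.
  by rewrite ltn_add2l; apply: p_mono.
- by move=> i; rewrite mxE; case: splitP => a _; rewrite ?ord1.
- by move=> i j; rewrite mxE; case: splitP => a _; rewrite ?ord1; [apply: u_lead | apply: p_lead].
- move=> i i'; rewrite mxE; case: (splitP i) => a ea; case: (splitP i') => b eb i'_i.
  + by case/eqP: i'_i; apply: val_inj; rewrite /= ea eb !ord1.
  + exact: M_lead.
  + by rewrite ord1 u_piv.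
  + by apply: p_col; apply: contra i'_i => /eqP ba; apply/eqP/val_inj; rewrite /= ea eb ba.
Qed.

Definition coord_hyperplane (j : 'I_n) : subsp F n :=
  lker (linfun (col j : 'rV[F]_n -> 'cV[F]_1)).

Lemma mem_coord_hyperplane j w : (w \in coord_hyperplane j) = (w 0 j == 0).
Proof.
rewrite memv_ker lfunE /=; apply/eqP/eqP => [/matrixP/(_ 0 0)|w0]; rewrite ?mxE //.
by apply/matrixP => i i'; rewrite !mxE !ord1 w0.
Qed.

Lemma leading_coord U : U != 0%VS -> exists j0 u,
  [/\ u \in U, u 0 j0 = 1 & forall w, w \in U -> forall j : 'I_n, (j < j0)%N -> w 0 j = 0].
Proof.
move=> U0; have [j' Uj'] : exists j, [exists w, (w \in U) && (w 0 j != 0)].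
  have /rV0Pn[j pick_j] : vpick U != 0 by rewrite vpick0.
  by exists j; apply/existsP; exists (vpick U); rewrite memv_pick.
case: (@arg_minnP _ j' (fun j => [exists w, (w \in U) && (w 0 j != 0)]) val Uj')
  => j0 /existsP[w0 /andP[w0U w0j0]] j0_min.
exists j0, ((w0 0 j0)^-1 *: w0); split; first by rewrite memvZ.
  by rewrite mxE mulVf.
move=> w wU j j_lt; apply/eqP; apply: contraTT j_lt => wj; rewrite -leqNgt.
by apply: j0_min; apply/existsP; exists w; rewrite wU.
Qed.

Lemma rref_exists U : exists k (M : 'M[F]_(k, n)), is_rref M /\ rowspan M = U.
Proof.
have [d] := ubnP (\dim U); elim: d U => // d IHd U dimU.
have [->|U0] := eqVneq U 0%VS.
  have rref0 : is_rref (0 : 'M[F]_(0, n)).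
    by exists (widen_ord (leq0n n)); split=> [[]|[]|[]|[]].
  by exists 0%N, 0; split; last by apply/eqP; rewrite -dimv_eq0 rref_dim.
have [j0 [u [uU u_j0 U_lead]]] := leading_coord U0.
pose U' := (U :&: coord_hyperplane j0)%VS.
have memU' w : (w \in U') = (w \in U) && (w 0 j0 == 0).
  by rewrite memv_cap mem_coord_hyperplane.
have dimU' : (\dim U' < d)%N.
  apply: leq_trans (dimv_lt (capvSl _ _) _) dimU; apply/eqP => U'_U.
  by move: uU; rewrite -U'_U memU' u_j0 oner_eq0 andbF.
have [k [M [[p Mp] spanM]]] := IHd U' dimU'.
have rowM i : row i M \in U' by rewrite -spanM row_in_rowspan.
have M_lead i (j : 'I_n) : (j <= j0)%N -> M i j = 0.
  move: (rowM i); rewrite memU' => /andP[rU /eqP rj0].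
  rewrite leq_eqVlt => /orP[/eqP/val_inj -> | j_lt]; first by rewrite -rj0 mxE.
  by rewrite -(U_lead _ rU j j_lt) mxE.
pose u' := u - \sum_i u 0 (p i) *: row i M.
have u'U : u' \in U.
  have U'U : {subset U' <= U} by apply/subvP/capvSl.
  by rewrite rpredB // rpred_sum // => i _; rewrite rpredZ // U'U ?rowM.
have u'_coord j : u' 0 j = u 0 j - \sum_i u 0 (p i) * M i j.
  by rewrite !mxE sum_rows_coord.
have u'_j0 : u' 0 j0 = 1.
  by rewrite u'_coord big1 ?subr0 // => i _; rewrite M_lead ?mulr0.
have u'_lead (j : 'I_n) : (j < j0)%N -> u' 0 j = 0.
  by move=> j_lt; rewrite u'_coord big1 ?subr0 ?U_lead // => i _; rewrite M_lead ?mulr0 // ltnW.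
have u'_piv i : u' 0 (p i) = 0 by rewrite !mxE rref_pivot_coord // subrr.
clearbody u'; exists (1 + k)%N, (col_mx u' M); split.
  by exists (fun i => if split i is inr i' then p i' else j0); apply: rref_pivots_col_mx.
rewrite rowspan_col_mx rowspan_row spanM; apply/eqP; rewrite eqEsubv.
rewrite subv_add -memvE u'U capvSl /=; apply/subvP => w wU.
rewrite -[w](subrK (w 0 j0 *: u')) addrC; apply: memv_add; first exact/memvZ/memv_line.
by rewrite memU' memvB ?memvZ //= !mxE u'_j0 mulr1 subrr.
Qed.

Lemma rref_of_dim k U : \dim U = k -> exists M : 'M[F]_(k, n), is_rref M /\ rowspan M = U.
Proof.
move=> dimU; have [k' [M [rM spanM]]] := rref_exists U.
have k'_k : k' = k by rewrite -dimU -spanM rref_dim.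
by subst k'; exists M.
Qed.

End EchelonForm.

Section LeastVector.
Variables (F : finFieldType) (n : nat) (o : F -> nat).
Hypotheses (o_inj : injective o) (o0 : o 0 = 0%N) (o1 : o 1 = 1%N).
Implicit Types (u v w : 'rV[F]_n) (U W : subsp F n).

Lemma vec_lt_irr v : ~ vec_lt o v v.
Proof. by case=> j [_]; rewrite ltnn. Qed.

Lemma vec_lt_trans u v w : vec_lt o u v -> vec_lt o v w -> vec_lt o u w.
Proof.
case=> j1 [eq1 lt1] [j2 [eq2 lt2]].
case: (ltngtP j1 j2) => [j12|j21|/val_inj j12].
- exists j1; split; last by rewrite -(eq2 j1 j12).
  by move=> j lt_j; rewrite eq1 ?eq2 // (ltn_trans lt_j).
- exists j2; split; last by rewrite (eq1 j2 j21).
  by move=> j lt_j; rewrite eq1 ?eq2 // (ltn_trans lt_j).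
- subst j2; exists j1; split=> [j lt_j|]; first by rewrite eq1 ?eq2.
  exact: ltn_trans lt2.
Qed.

Lemma vec_lt_asym v w : vec_lt o v w -> vec_lt o w v -> False.
Proof. by move=> vw /(vec_lt_trans vw); apply: vec_lt_irr. Qed.

Lemma min_nonzero_uniq U v w :
  is_min_nonzero o U v -> is_min_nonzero o U w -> v = w.
Proof.
case=> vU v0 v_min [wU w0 w_min]; have [//|vw] := eqVneq v w.
by exfalso; apply: (@vec_lt_asym v w); [apply: v_min; rewrite // eq_sym | apply: w_min].
Qed.

Lemma o_gt0 (c : F) : c != 0 -> (o 0%R < o c)%N.
Proof. by move=> c0; rewrite o0 lt0n -o0 (inj_eq o_inj). Qed.

Lemma o_gt1 (c : F) : c != 0 -> c != 1 -> (o 1%R < o c)%N.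
Proof.
move=> c0 c1; rewrite ltn_neqAle (inj_eq o_inj) eq_sym c1 o1.
by have := o_gt0 c0; rewrite o0.
Qed.

Lemma rref_last_row_min k (M : 'M[F]_(k.+1, n)) :
  is_rref M -> is_min_nonzero o (rowspan M) (row ord_max M).
Proof.
case=> p Mp; have [p_mono p_one p_lead p_col] := Mp.
split; first exact: row_in_rowspan.
  by apply/rV0Pn; exists (p ord_max); rewrite mxE p_one oner_eq0.
move=> _ /rowspan_lincomb[c ->]; set w := \sum_i _ => w0 w_last.
have [i1 [ci1 c_before]] : exists i1, c i1 != 0 /\ forall i : 'I_k.+1, (i < i1)%N -> c i = 0.
  have /existsP[i0 ci0] : [exists i, c i != 0].
    apply: contraR w0 => /existsPn c0; apply/eqP/big1 => i _.
    by have /negPn/eqP -> := c0 i; rewrite scale0r.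
  case: (@arg_minnP _ i0 (fun i => c i != 0) val ci0) => i1 ci1 i1_min.
  exists i1; split=> // i i_lt; apply/eqP; apply: contraTT i_lt => ci.
  by rewrite -leqNgt i1_min.
have p_le_max i : (p i <= p ord_max)%N.
  by have [->|i_max] := eqVneq i ord_max; rewrite // ltnW // p_mono // ltn_neqAle leq_ord i_max.
have w_before (j : 'I_n) : (j < p i1)%N -> w 0 j = 0.
  move=> j_lt; rewrite sum_rows_coord big1 // => i _.
  have [i_lt|i_ge] := ltnP i i1; first by rewrite c_before ?mul0r.
  rewrite p_lead ?mulr0 //; apply: leq_trans j_lt _.
  by move: i_ge; rewrite leq_eqVlt => /orP[/eqP/val_inj <-|/p_mono/ltnW].
exists (p i1); split=> [j j_lt|].
  by rewrite w_before // mxE p_lead // (leq_trans j_lt (p_le_max i1)).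
rewrite mxE rref_pivot_coord //; have [i1_max|i1_max] := eqVneq i1 ord_max; last first.
  by rewrite p_col 1?eq_sym // o_gt0.
rewrite i1_max in ci1 c_before *; rewrite p_one o_gt1 //.
apply: contra w_last => /eqP c1; rewrite /w (bigD1 ord_max) //= c1 scale1r.
rewrite big1 ?addr0 // => i i_max.
by rewrite c_before ?scale0r // ltn_neqAle leq_ord i_max.
Qed.

Lemma min_nonzero_exists U : U != 0%VS -> exists v, is_min_nonzero o U v.
Proof.
rewrite -dimv_eq0 -lt0n => /prednK dimU.
have [M [rM <-]] := rref_of_dim (esym dimU).
by exists (row ord_max M); apply: rref_last_row_min.
Qed.

Lemma subsp_lt_dim k (W' W : subsp F n) :
  subsp_lt o k W' W -> \dim W' = k /\ \dim W = k.
Proof. by case=> M [N [rM rN <- <- _]]; rewrite !rref_dim. Qed.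

Lemma subsp_lt_min k (W' W : subsp F n) (v' v : 'rV[F]_n) : subsp_lt o k W' W ->
  is_min_nonzero o W' v' -> is_min_nonzero o W v -> v' = v \/ vec_lt o v' v.
Proof.
case=> M [N [rM rN <- <- [i [above lt_i]]]]; move: i above lt_i.
case: k => [|k] in M N rM rN *; first by case.
move=> i above lt_i /min_nonzero_uniq/(_ (rref_last_row_min rM)) ->.
move=> /min_nonzero_uniq/(_ (rref_last_row_min rN)) ->.
have [i_max|i_max] := eqVneq i ord_max; first by right; rewrite -i_max.
by left; apply: above; rewrite ltn_neqAle leq_ord i_max.
Qed.

Lemma subsp_lt_of_min k (W' W : subsp F n) (v' v : 'rV[F]_n) :
    (0 < k)%N -> \dim W' = k -> \dim W = k ->
    is_min_nonzero o W' v' -> is_min_nonzero o W v -> vec_lt o v' v ->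
  subsp_lt o k W' W.
Proof.
case: k => // k _ dimW' dimW v'_min v_min lt_v.
have [M [rM spanM]] := rref_of_dim dimW'; have [N [rN spanN]] := rref_of_dim dimW.
exists M, N; split=> //; exists ord_max; split=> [i|].
  by rewrite ltnNge leq_ord.
have := rref_last_row_min rM; rewrite spanM => /min_nonzero_uniq/(_ v'_min) ->.
by have := rref_last_row_min rN; rewrite spanN => /min_nonzero_uniq/(_ v_min) ->.
Qed.

Lemma min_nonzero_le W w x : is_min_nonzero o W w -> x \in W -> x != 0 ->
  w = x \/ vec_lt o w x.
Proof.
by case=> _ _ w_least xW x0; have [|xw] := eqVneq x w; [left | right; apply: w_least].
Qed.

Lemma least_vector_flag d U : \dim U = d -> exists A : nat -> subsp F n,
  [/\ A d = U, forall l, (l <= d)%N -> \dim (A l) = l &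
      forall l, (l < d)%N -> (A l <= A l.+1)%VS /\
        exists2 x, is_min_nonzero o (A l.+1) x & x \notin A l].
Proof.
elim: d U => [|d IHd] U dimU.
  by exists (fun=> U); split=> // l; rewrite leqn0 => /eqP ->.
have [x x_min] : exists x, is_min_nonzero o U x.
  by apply: min_nonzero_exists; rewrite -dimv_eq0 dimU.
have [xU x0 _] := x_min.
pose H := (U :\: <[x]>)%VS.
have xH : x \notin H.
  by apply: contra x0 => xH; rewrite -memv0 -(capv_diff U <[x]>) memv_cap xH memv_line.
have dimH : \dim H = d.
  have := dimv_cap_compl U <[x]>.
  by rewrite (capv_idPr _) -?memvE // dim_vline x0 dimU add1n => -[].
have [A [A_d A_dim A_flag]] := IHd H dimH.
exists (fun l => if l == d.+1 then U else A l); split=> [|l l_d|l l_d].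
- by rewrite eqxx.
- by case: eqP => [-> //|l_d']; apply: A_dim; lia.
rewrite eqSS (ltn_eqF l_d); have [->|l_d'] := eqVneq l d.
  by rewrite A_d; split; [exact: diffvSl | exists x].
by apply: A_flag; lia.
Qed.

End LeastVector.

Section QMatroids.
Variables (F : finFieldType) (n : nat) (rho : subsp F n -> nat).
Hypothesis rho_ax : qmatroid_axioms rho.

Lemma independent_subv (X Y : subsp F n) :
  independent rho X -> (Y <= X)%VS -> independent rho Y.
Proof.
case: rho_ax => rho_dim _ rho_sub indX YX.
have capXY : (X :&: Y)%VS = Y by apply/capv_idPr.
have sumXY : (X :\: Y + Y)%VS = X by rewrite -{2}capXY addv_diff_cap.
have := rho_sub (X :\: Y)%VS Y; rewrite sumXY.
have := dimv_cap_compl X Y; rewrite capXY.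
have := rho_dim (X :\: Y)%VS; have := rho_dim Y.
rewrite /independent in indX *; lia.
Qed.

Lemma qbasis_of_dim (B : subsp F n) :
  independent rho B -> \dim B = qrank rho -> qbasis rho B.
Proof.
case: rho_ax => _ rho_mono _ indB dimB; split=> // U indU BU.
apply/eqP; rewrite eq_sym eqEdim BU dimB -indU; exact: rho_mono (subvf U).
Qed.

End QMatroids.

Section Facets.
Variables (F : finFieldType) (n : nat) (o : F -> nat) (rho : subsp F n -> nat).
Hypothesis rho_ax : qmatroid_axioms rho.
Local Notation r := (qrank rho).
Implicit Types (A B : nat -> subsp F n) (W : subsp F n).

Lemma facet_of_flag A : independent rho (A r) ->
    (forall l, (l <= r)%N -> \dim (A l) = l) ->
    (forall l, (l < r)%N -> (A l <= A l.+1)%VS) ->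
  facet rho A.
Proof.
move=> indAr A_dim A_step; split=> [l /andP[_ l_r]|l _ l_r].
  split; last exact: A_dim.
  apply: (independent_subv rho_ax indAr); apply: (chain_subv (lo := 0)) => //.
    by move=> i /andP[_ /A_step].
  by rewrite l_r leqnn.
split; first exact: A_step.
by apply/eqP => Al; move: (A_dim l.+1 l_r); rewrite -Al A_dim ?(ltnW l_r) //; lia.
Qed.

Lemma facet_subv A l m : facet rho A -> (1 <= l)%N -> (l <= m <= r)%N -> (A l <= A m)%VS.
Proof. by case=> _ Achain; apply: chain_subv => i /andP[i1 ir]; case: (Achain i i1 ir). Qed.

Lemma in_restriction_neighbour A m : facet rho A -> (1 <= m <= r)%N ->
    in_restriction o rho A m ->
  exists B, [/\ facet rho B, B m != A m, subsp_lt o m (B m) (A m) &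
                forall l, (1 <= l <= r)%N -> l != m -> B l = A l].
Proof.
case=> Adim _ m_r [B [HB [e [e_r Be_Ae above Be_lt]] A_in_B]].
have B_A l : (1 <= l <= r)%N -> l != m -> B l = A l.
  move=> l_r l_m; have [l' [l'_r Al_Bl']] := A_in_B l l_r l_m.
  have l'_l : l' = l by rewrite -(Adim l l_r).2 Al_Bl' (HB.1 l' l'_r).2.
  by rewrite Al_Bl' l'_l.
have e_m : e = m by apply/eqP; apply: contraNT Be_Ae => e_m; rewrite B_A.
by subst e; exists B.
Qed.

Lemma facet_neighbour_cap A B m : facet rho A -> facet rho B -> (1 <= m <= r)%N ->
    B m != A m -> (forall l, (1 <= l <= r)%N -> l != m -> B l = A l) ->
  \dim (B m :&: A m)%VS = m.-1 /\
  forall y, y \in (B m :&: A m)%VS -> y != 0 -> (1 < m)%N /\ y \in A m.-1.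
Proof.
move=> HA HB m_r Bm_Am B_A.
have dimAm := (HA.1 m m_r).2; have dimBm := (HB.1 m m_r).2.
have := dimv_cap_lt (U := B m) (V := A m); rewrite dimBm dimAm => /(_ erefl Bm_Am) cap_lt.
have [m_1|m_gt1] := leqP m 1.
  have m1 : m = 1%N by lia.
  have cap0 : (B m :&: A m)%VS = 0%VS.
    by apply/eqP; rewrite -dimv_eq0 -leqn0 -ltnS (leq_trans cap_lt m_1).
  by rewrite cap0 dimv0 m1; split=> // y; rewrite memv0 => /eqP ->; rewrite eqxx.
have m1_r : (1 <= m.-1 <= r)%N by lia.
have Am1_cap : (A m.-1 <= B m :&: A m)%VS.
  rewrite subv_cap -{1}(B_A m.-1) ?(facet_subv HB) ?(facet_subv HA) //; lia.
have cap_eq : (B m :&: A m)%VS = A m.-1.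
  by apply/eqP; rewrite eq_sym eqEdim Am1_cap (HA.1 _ m1_r).2 -ltnS (prednK (ltnW m_gt1)).
by rewrite cap_eq (HA.1 _ m1_r).2; split=> // y yA _.
Qed.

Lemma in_restriction_replace A m W : facet rho A -> (1 <= m <= r)%N ->
    independent rho W -> \dim W = m -> ((1 < m)%N -> (A m.-1 <= W)%VS) ->
    ((m < r)%N -> (W <= A m.+1)%VS) -> W != A m -> subsp_lt o m W (A m) ->
  in_restriction o rho A m.
Proof.
move=> [Adim Achain] m_r indW dimW Am1_W W_Am1 W_Am W_lt.
pose B l := if l == m then W else A l.
have Bdim l : (1 <= l <= r)%N -> independent rho (B l) /\ \dim (B l) = l.
  by rewrite /B; case: eqP => [->|_]; [split | apply: Adim].
exists B; split.
- split=> // l l1 l_r; split; last first.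
    have l_r' : (1 <= l <= r)%N by lia.
    have l1_r' : (1 <= l.+1 <= r)%N by lia.
    by apply/eqP => Bl; move: (Bdim _ l1_r').2; rewrite -Bl (Bdim _ l_r').2; lia.
  rewrite /B; have [l_m|l_m] := eqVneq l m.
    by rewrite l_m (gtn_eqF (ltnSn m)); apply: W_Am1; rewrite -l_m.
  have [l1_m|_] := eqVneq l.+1 m; last exact: (Achain l l1 l_r).1.
  by move: Am1_W; rewrite -l1_m; apply.
- exists m; split=> //; rewrite /B ?eqxx //.
  by move=> e /andP[m_e _]; rewrite gtn_eqF.
- by move=> l l_r l_m; exists l; rewrite /B (negbTE l_m).
Qed.

End Facets.

Section Exchange.
Variables (F : finFieldType) (n : nat) (o : F -> nat) (rho : subsp F n -> nat).
Hypotheses (o_inj : injective o) (o0 : o 0 = 0%N) (o1 : o 1 = 1%N).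
Hypotheses (rho_ax : qmatroid_axioms rho) (r_gt0 : (1 <= qrank rho)%N).
Local Notation r := (qrank rho).
Implicit Types (A B : nat -> subsp F n).

Lemma in_restriction_of_min_step A m x : facet rho A -> (1 <= m < r)%N ->
    (A m.-1 <= A m)%VS -> \dim (A m.-1) = m.-1 ->
    is_min_nonzero o (A m.+1) x -> x \notin A m ->
  in_restriction o rho A m.
Proof.
move=> HA m_r Am1_Am dimAm1 x_min xAm.
have m_r' : (1 <= m <= r)%N by lia.
have m1_r : (1 <= m.+1 <= r)%N by lia.
have Am_Am1 : (A m <= A m.+1)%VS by apply: facet_subv HA _ _; lia.
have [xAm1 x0 x_least] := x_min.
pose W := (A m.-1 + <[x]>)%VS.
have W_Am1 : (W <= A m.+1)%VS.
  by rewrite subv_add -memvE xAm1 (subv_trans Am1_Am Am_Am1).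
have dimW : \dim W = m.
  by rewrite dimv_add_line ?dimAm1 ?prednK //; [lia | apply: contra xAm; apply/subvP].
have xW : x \in W by rewrite (subvP (addvSr _ _)) ?memv_line.
apply: (in_restriction_replace (W := W)) => //.
- by apply: (independent_subv rho_ax _ W_Am1); apply: (HA.1 _ m1_r).1.
- by move=> _; apply: addvSl.
- by apply: contraNneq xAm => <-.
have [w w_min] : exists w, is_min_nonzero o W w.
  by apply: min_nonzero_exists => //; rewrite -dimv_eq0 dimW; lia.
have [a a_min] : exists a, is_min_nonzero o (A m) a.
  by apply: min_nonzero_exists => //; rewrite -dimv_eq0 (HA.1 _ m_r').2; lia.
have [aAm a0 _] := a_min.
have x_lt_a : vec_lt o x a.
  by apply: x_least; [exact: (subvP Am_Am1) | done | apply: contraNneq xAm => <-].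
(* [min W <= x < min (A m)] *)
apply: (subsp_lt_of_min o_inj o0 o1 _ _ _ w_min a_min) => //; first lia.
  exact: (HA.1 _ m_r').2.
have [->|w_lt_x] := min_nonzero_le w_min xW x0; first exact: x_lt_a.
exact: vec_lt_trans w_lt_x x_lt_a.
Qed.

Lemma neighbour_level_top A B k v : facet rho A -> facet rho B -> (1 <= k <= r)%N ->
    subsp_lt o k (B k) (A k) -> (forall l, (1 <= l <= r)%N -> l != k -> B l = A l) ->
    is_min_nonzero o (A r) v -> v \in A k -> v \notin B k ->
  k = r.
Proof.
move=> HA HB k_r Bk_lt B_A v_min vAk vBk; have [_ v0 v_least] := v_min.
apply/eqP; rewrite eqn_leq (andP k_r).2 leqNgt; apply/negP => k_lt_r.
have Bk_Ar : (B k <= A r)%VS.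
  apply: subv_trans (proj1 (HB.2 k _ k_lt_r)) _; first lia.
  by rewrite B_A ?(facet_subv HA) //; lia.
have [w w_min] : exists w, is_min_nonzero o (B k) w.
  by apply: min_nonzero_exists => //; rewrite -dimv_eq0 (HB.1 k k_r).2; lia.
have [wBk w0 _] := w_min.
have v_lt_w : vec_lt o v w.
  by apply: v_least; [exact: (subvP Bk_Ar) | done | apply: contraNneq vBk => <-].
have v_min_k : is_min_nonzero o (A k) v.
  by split=> // u uAk; apply: v_least; apply: (subvP (facet_subv HA _ _)) uAk; lia.
have [w_v|w_lt_v] := subsp_lt_min o_inj o0 o1 Bk_lt w_min v_min_k.
  by move: vBk; rewrite -w_v wBk.
exact: vec_lt_asym w_lt_v v_lt_w.
Qed.

Lemma exchange_pair_of_full_facet A : facet rho A -> restriction_full o rho A ->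
  exists Fi Fj, [/\ qbasis rho Fi, qbasis rho Fj, subsp_lt o r Fi Fj,
                   \dim (Fi :&: Fj)%VS = r.-1 &
                   exists v, is_min_nonzero o Fj v /\ v \notin Fi].
Proof.
move=> HA A_full; have r_r : (1 <= r <= r)%N by rewrite r_gt0 leqnn.
have [v v_min] : exists v, is_min_nonzero o (A r) v.
  by apply: min_nonzero_exists => //; rewrite -dimv_eq0 (HA.1 r r_r).2 -lt0n.
have [vAr v0 _] := v_min.
have ex_k : exists k, (0 < k)%N && (v \in A k) by exists r; rewrite r_gt0 vAr.
case: (ex_minnP ex_k) => k /andP[k_gt0 vAk] k_min.
have k_r : (1 <= k <= r)%N by rewrite k_gt0 k_min ?r_gt0.
have [B [HB Bk_Ak Bk_lt B_A]] := in_restriction_neighbour HA k_r (A_full k k_r).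
have [dim_cap cap_Ak1] := facet_neighbour_cap HA HB k_r Bk_Ak B_A.
have vBk : v \notin B k.
  apply/negP => vBk; have [|k_gt1 vAk1] := cap_Ak1 v _ v0; first by rewrite memv_cap vBk.
  have : (k <= k.-1)%N by apply: k_min; rewrite vAk1 andbT; lia.
  lia.
have k_eq_r : k = r := neighbour_level_top HA HB k_r Bk_lt B_A v_min vAk vBk.
rewrite k_eq_r in Bk_lt dim_cap vBk.
exists (B r), (A r); split=> //; last by exists v.
  by apply: qbasis_of_dim; [|apply: (HB.1 r r_r).1|apply: (HB.1 r r_r).2].
by apply: qbasis_of_dim; [|apply: (HA.1 r r_r).1|apply: (HA.1 r r_r).2].
Qed.

Lemma full_facet_of_exchange_pair Fi Fj v : qbasis rho Fi -> qbasis rho Fj ->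
    subsp_lt o r Fi Fj -> \dim (Fi :&: Fj)%VS = r.-1 ->
    is_min_nonzero o Fj v -> v \notin Fi ->
  exists A, facet rho A /\ restriction_full o rho A.
Proof.
move=> [indFi _] [indFj _] Fij_lt dim_cap v_min vFi.
have [dimFi dimFj] := subsp_lt_dim Fij_lt.
have [A' [A'_top A'_dim A'_flag]] := least_vector_flag o_inj o0 o1 dim_cap.
pose A l := if (l < r)%N then A' l else Fj.
have A_r : A r = Fj by rewrite /A ltnn.
have A_top : A r.-1 = (Fi :&: Fj)%VS by rewrite /A ltn_predL r_gt0.
have A_dim l : (l <= r)%N -> \dim (A l) = l.
  by rewrite /A; case: ltnP => [l_r _|r_l l_r]; [apply: A'_dim | rewrite dimFj]; lia.
have A_flag l : (l < r)%N ->
    (A l <= A l.+1)%VS /\ exists2 x, is_min_nonzero o (A l.+1) x & x \notin A l.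
  move=> l_r; have [l1_r|r_l1] := ltnP l.+1 r.
    by rewrite /A l_r l1_r; apply: A'_flag; lia.
  have -> : l = r.-1 by lia.
  rewrite prednK // A_top A_r; split; first exact: capvSr.
  by exists v => //; apply: contra vFi => /memv_capP[].
have HA : facet rho A.
  by apply: facet_of_flag => // [|l /A_flag[]//]; rewrite A_r.
exists A; split=> // m m_r; have [m_lt_r|m_ge_r] := ltnP m r.
  have [_ [x x_min xAm]] := A_flag m m_lt_r.
  have [|Am1_Am _] := A_flag m.-1; first lia.
  rewrite prednK in Am1_Am; last lia.
  by apply: in_restriction_of_min_step x_min xAm; rewrite ?A_dim //; lia.
have -> : m = r by lia.
apply: (in_restriction_replace (W := Fi)) => //; rewrite ?ltnn ?A_r ?r_gt0 ?leqnn //.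
  by move=> _; rewrite A_top capvSl.
by apply: contraNneq vFi => ->; case: v_min.
Qed.

End Exchange.

Theorem lemma5p8 (F : finFieldType) (n : nat) (o : F -> nat)
  (o_inj : injective o) (o0 : o 0 = 0%N) (o1 : o 1 = 1%N)
  (rho : subsp F n -> nat) (Hrho : qmatroid_axioms rho)
  (Hr : (1 <= qrank rho)%N) :
  (exists A : nat -> subsp F n, facet rho A /\ restriction_full o rho A) <->
  (exists Fi Fj : subsp F n,
     [/\ qbasis rho Fi, qbasis rho Fj, subsp_lt o (qrank rho) Fi Fj,
         \dim (Fi :&: Fj)%VS = (qrank rho).-1 &
         exists v, is_min_nonzero o Fj v /\ v \notin Fi]).
Proof.
split=> [[A [HA A_full]] | [Fi [Fj [HFi HFj Fij_lt dim_cap [v [v_min vFi]]]]]].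
  exact: exchange_pair_of_full_facet HA A_full.
exact: full_facet_of_exchange_pair HFi HFj Fij_lt dim_cap v_min vFi.
Qed.
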